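(* Let $\{t_k\}_{k\ge1}$ and $\{\xi_k\}_{k\ge1}$ be two sequences in $[1,+\infty)$. Assume that $\{t_k^2\xi_k\}$ is nondecreasing, $t_k^2\xi_k\to+\infty$, and $t_{k+1}^2\xi_{k+1}-t_k^2\xi_k\le\rho t_{k+1}\xi_{k+1}$ for all $k\ge1$, for some $0<\rho\le1$. Then $\sum_{k=1}^{+\infty}\frac1{t_k}=+\infty$. *)

From Stdlib Require Import Reals.
From Coquelicot Require Import Coquelicot.

(* With a_k = t_k^2 xi_k, the hypotheses give a_{k+1} - a_k <= rho t_{k+1} xi_{k+1}
   <= a_{k+1} / t_{k+1}, so 1/t_{k+1} dominates the relative increment
   (a_{k+1} - a_k) / a_{k+1}.  For a nondecreasing sequence tending to +oo these
   relative increments have a divergent sum: over any block p < k <= n they add up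
   to at least 1 - a_p / a_n, which exceeds 1/2 as soon as a_n > 2 a_p. *)
From Stdlib Require Import Reals.
From Coquelicot Require Import Coquelicot.
From Stdlib Require Import Lra Lia Psatz.
Open Scope R_scope.

Section RelativeIncrements.

Variables b u : nat -> R.

Hypothesis b_0_pos : 0 < b 0.
Hypothesis b_growing : Un_growing b.
Hypothesis b_lim : is_lim_seq b p_infty.
Hypothesis u_ge0 : forall k, 0 <= u k.
Hypothesis increment_le : forall k, b (S k) - b k <= b (S k) * u (S k).

Lemma b_pos (n : nat) : 0 < b n.
Proof.
  pose proof (tech9 b b_growing 0 n (Nat.le_0_l n)). lra.
Qed.

Lemma partial_sum_growing : Un_growing (sum_f_R0 u).
Proof.
  intro n. simpl. pose proof (u_ge0 (S n)). lra.
Qed.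

Lemma partial_sum_le (p n : nat) : (p <= n)%nat -> sum_f_R0 u p <= sum_f_R0 u n.
Proof. exact (tech9 _ partial_sum_growing p n). Qed.

Lemma increment_le_block_sum (p n : nat) :
  (p <= n)%nat -> b n - b p <= b n * (sum_f_R0 u n - sum_f_R0 u p).
Proof.
  induction 1 as [|m Hpm IH].
  - lra.
  - simpl.
    pose proof (increment_le m) as Hinc.
    assert (Hgap : b m * (sum_f_R0 u m - sum_f_R0 u p)
                   <= b (S m) * (sum_f_R0 u m - sum_f_R0 u p)).
    { apply Rmult_le_compat_r; [pose proof (partial_sum_le p m Hpm) | apply b_growing]; lra. }
    nra.
Qed.

Lemma partial_sum_block_ge_half (p : nat) :
  exists n, sum_f_R0 u p + / 2 <= sum_f_R0 u n.
Proof.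
  destruct (proj2 (is_lim_seq_spec b p_infty) b_lim (2 * b p)) as [N HN].
  exists (Nat.max N p).
  assert (Hbig : 2 * b p < b (Nat.max N p)) by (apply HN; lia).
  pose proof (increment_le_block_sum p (Nat.max N p) (Nat.le_max_r N p)) as Hblock.
  pose proof (b_pos (Nat.max N p)) as Hpos.
  apply Rmult_le_reg_l with (b (Nat.max N p)); lra.
Qed.

Lemma partial_sum_unbounded (j : nat) : exists n, INR j / 2 <= sum_f_R0 u n.
Proof.
  induction j as [|j [n Hn]].
  - exists 0%nat. simpl. pose proof (u_ge0 0). lra.
  - destruct (partial_sum_block_ge_half n) as [m Hm].
    exists m. rewrite S_INR. lra.
Qed.

Theorem is_lim_seq_sum_relative_increments : is_lim_seq (sum_f_R0 u) p_infty.
Proof.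
  apply is_lim_seq_spec. intro M.
  destruct (INR_unbounded (2 * M)) as [j Hj].
  destruct (partial_sum_unbounded j) as [N HN].
  exists N. intros n Hn.
  pose proof (partial_sum_le N n Hn). lra.
Qed.

End RelativeIncrements.

Theorem lemmaA6 (t xi : nat -> R) (rho : R) :
  (forall k, (1 <= k)%nat -> 1 <= t k) ->
  (forall k, (1 <= k)%nat -> 1 <= xi k) ->
  (forall k, (1 <= k)%nat -> t k ^ 2 * xi k <= t (S k) ^ 2 * xi (S k)) ->
  is_lim_seq (fun k => t k ^ 2 * xi k) p_infty ->
  0 < rho -> rho <= 1 ->
  (forall k, (1 <= k)%nat ->
     t (S k) ^ 2 * xi (S k) - t k ^ 2 * xi k <= rho * t (S k) * xi (S k)) ->
  is_lim_seq (fun n => sum_f_R0 (fun k => / t (S k)) n) p_infty.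
Proof.
  intros Ht Hxi Hmon Hlim _ Hrho1 Hstep.
  apply (is_lim_seq_sum_relative_increments (fun k => t (S k) ^ 2 * xi (S k))).
  - pose proof (Ht 1%nat (le_n 1)). pose proof (Hxi 1%nat (le_n 1)). nra.
  - intro k. apply Hmon. lia.
  - exact (proj1 (is_lim_seq_incr_1 _ _) Hlim).
  - intro k. pose proof (Ht (S k) ltac:(lia)).
    apply Rlt_le, Rinv_0_lt_compat. lra.
  - intro k. cbv beta.
    pose proof (Ht (S (S k)) ltac:(lia)) as Ht2.
    pose proof (Hxi (S (S k)) ltac:(lia)) as Hxi2.
    assert (Hdiv : t (S (S k)) ^ 2 * xi (S (S k)) * / t (S (S k))
                   = t (S (S k)) * xi (S (S k))) by (field; lra).
    rewrite Hdiv.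
    assert (Hrho : rho * t (S (S k)) * xi (S (S k)) <= t (S (S k)) * xi (S (S k))).
    { rewrite Rmult_assoc. rewrite <- (Rmult_1_l (t (S (S k)) * xi (S (S k)))) at 2.
      apply Rmult_le_compat_r; nra. }
    pose proof (Hstep (S k) ltac:(lia)). lra.
Qed.
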